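(* In the variety $\mathcal V$, the ternary term $p(x,y,z):=\Big(x\wedge\big((z\wedge y)\vee y'\big)\Big)\vee\Big(z\wedge\big((x\wedge y)\vee y'\big)\Big)$ satisfies the identities $p(x,x,z)\approx z$ and $p(x,z,z)\approx x$. Moreover, putting $u:=(x\wedge y)\vee(x\vee y)'$, for every $\mathbf L\in\mathcal V$ and all $x,y,z\in L$ we have: $u\wedge z=z$ and $u'\vee z=z$ if and only if $x=y$.
   Context: $\mathcal V$ is the variety of algebras $(L,\vee,\wedge,{}',0,1)$ that are bounded lattices with a complementation $'$ (i.e. $x\vee x'\approx1$, $x\wedge x'\approx0$) satisfying the identities $x\vee y'\approx y'\vee\big((x\vee y')\wedge y\big)$ and $x\wedge y\approx x\wedge\big((x\wedge y)\vee x'\big)$. *)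

From mathcomp Require Import all_boot all_order.
Import Order.TTheory.
Local Open Scope order_scope.

(* An algebra (L, join, meet, ', 0, 1) of the variety V: L is a bounded
   lattice (mathcomp tbLatticeType, 0 = \bot, 1 = \top) and c is the unary
   operation ' , required to be a complementation and to satisfy the two
   defining identities of V. *)
Definition inV {d : Order.disp_t} {L : tbLatticeType d} (c : L -> L) : Prop :=
  [/\ (forall x : L, x `|` c x = \top),
      (forall x : L, x `&` c x = \bot),
      (forall x y : L, x `|` c y = c y `|` ((x `|` c y) `&` y)) &
      (forall x y : L, x `&` y = x `&` ((x `&` y) `|` c x))].

Definition pterm {d : Order.disp_t} {L : tbLatticeType d} (c : L -> L)
  (x y z : L) : L :=
  (x `&` ((z `&` y) `|` c y)) `|` (z `&` ((x `&` y) `|` c y)).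

Definition uterm {d : Order.disp_t} {L : tbLatticeType d} (c : L -> L)
  (x y : L) : L :=
  (x `&` y) `|` c (x `|` y).

From mathcomp Require Import all_boot all_order.
Import Order.TTheory.
Local Open Scope order_scope.

(* The identities for p follow from the second defining identity of V, which
   says x /\ ((x /\ y) \/ x') = x /\ y.  For the characterisation, the two
   conditions say u' <= z <= u; a complement below its element forces u = 1,
   and u = 1 turns the same identity, applied to x \/ y and x /\ y, into
   x /\ y = x \/ y, i.e. x = y. *)

Lemma meet_eq_join_eq {d : Order.disp_t} {L : latticeType d} (x y : L) :
  x `&` y = x `|` y -> x = y.
Proof.
move=> meet_join; apply: le_anti; apply/andP; split.
- by rewrite (le_trans (leUl x y)) // -meet_join leIr.
- by rewrite (le_trans (leUr y x)) // -meet_join leIl.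
Qed.

Section ComplementedLattice.

Context {d : Order.disp_t} {L : tbLatticeType d} {c : L -> L}.
Hypothesis joinxC : forall x : L, x `|` c x = \top.
Hypothesis meetxC : forall x : L, x `&` c x = \bot.

Lemma compl_top : c \top = \bot.
Proof. by rewrite -(meetxC \top) meet1x. Qed.

Lemma compl_le_top (u : L) : c u <= u -> u = \top.
Proof.
move=> cu_le_u.
have cu_bot : c u = \bot by rewrite -(meetxC u) meetC (meet_l cu_le_u).
by rewrite -(joinxC u) cu_bot joinx0.
Qed.

Lemma interval_compl_top (u z : L) :
  (u `&` z = z /\ c u `|` z = z) <-> u = \top.
Proof.
split=> [[uz cuz] | ->]; last by rewrite meet1x compl_top join0x.
apply: compl_le_top; rewrite (@le_trans _ _ z) //.
- by rewrite -cuz leUl.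
- by rewrite -uz leIl.
Qed.

Hypothesis meet_joinC : forall x y : L, x `&` y = x `&` ((x `&` y) `|` c x).

Lemma pterm_xxz (x z : L) : pterm c x x z = z.
Proof.
rewrite /pterm meetxx joinxC meetx1 [z `&` x]meetC -meet_joinC.
exact/join_r/leIr.
Qed.

Lemma pterm_xzz (x z : L) : pterm c x z z = x.
Proof.
rewrite /pterm meetxx joinxC meetx1 [x `&` z]meetC -meet_joinC.
exact/join_l/leIr.
Qed.

Lemma uterm_top_eq (x y : L) : uterm c x y = \top <-> x = y.
Proof.
split=> [u_top | <-]; last by rewrite /uterm meetxx joinxx.
apply: meet_eq_join_eq.
have join_meet : (x `|` y) `&` (x `&` y) = x `&` y.
  by rewrite meetC; apply/meet_l/(le_trans (leIl _ _) (leUl _ _)).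
rewrite -[LHS]join_meet (meet_joinC (x `|` y)) join_meet.
by rewrite -/(uterm c x y) u_top meetx1.
Qed.

End ComplementedLattice.

Theorem mainTheorem6 (d : Order.disp_t) (L : tbLatticeType d) (c : L -> L)
  (HV : inV c) :
  (forall x z : L, pterm c x x z = z) /\
  (forall x z : L, pterm c x z z = x) /\
  (forall x y z : L,
     (uterm c x y `&` z = z /\ c (uterm c x y) `|` z = z) <-> x = y).
Proof.
case: HV => joinxC meetxC _ meet_joinC.
split; [|split].
- exact: pterm_xxz joinxC meet_joinC.
- exact: pterm_xzz joinxC meet_joinC.
- move=> x y z.
  exact: iff_trans (interval_compl_top joinxC meetxC _ z)
                   (uterm_top_eq joinxC meet_joinC x y).
Qed.
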